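(* Let $V$ be a vertex operator algebra and $m$ a positive integer. Then $$A_{m,0}(V)*_{m,0}^mA_{0,m}(V)\cong O_{m-1}(V)/O_m(V),$$ where the left side denotes the linear span in $A_m(V)$ of all $a*_{m,0}^mb$ with $a\in A_{m,0}(V)$, $b\in A_{0,m}(V)$.
   Context: Let $V=\bigoplus_nV_n$ be a vertex operator algebra. For homogeneous $u,v\in V$ and $m,n,p\in\mathbb Z_{\ge0}$ put $u*_{m,p}^nv=\sum_{i=0}^p(-1)^i\binom{m+n-p+i}{i}\mathrm{Res}_z\frac{(1+z)^{\mathrm{wt}\,u+m}}{z^{m+n-p+i+1}}Y(u,z)v$, $u*_m^nv=u*_{m,m}^nv$, $u\circ_m^nv=\mathrm{Res}_z\frac{(1+z)^{\mathrm{wt}\,u+m}}{z^{n+m+2}}Y(u,z)v$. $O'_{n,m}(V)$ = span of all $u\circ_m^nv$ and $L(-1)u+(L(0)+m-n)u$; $O_n(V)=O'_{n,n}(V)$ (so $O_n(V)$ is spanned by $\mathrm{Res}_zY(u,z)v\frac{(1+z)^{\mathrm{wt}\,u+n}}{z^{2n+2}}$ and $L(-1)u+L(0)u$, and $O_m(V)\subseteq O_{m-1}(V)$); $O''_{n,m}(V)$ = span of $u*_{m,p_3}^n((a*_{p_1,p_2}^{p_3}b)*_{m,p_1}^{p_3}c-a*_{m,p_2}^{p_3}(b*_{m,p_1}^{p_2}c))$; $O'''_{n,m}(V)=\sum_p(V*_p^nO_p(V))*_{m,p}^nV$; $A_{n,m}(V)=V/(O'_{n,m}+O''_{n,m}+O'''_{n,m})$.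 $A_m(V)=A_{m,m}(V)=V/O_m(V)$ is an associative algebra and $*_{m,0}^m$ induces a bilinear map $A_{m,0}(V)\times A_{0,m}(V)\to A_m(V)$. *)

From mathcomp Require Import all_boot all_order all_algebra.
Set Implicit Arguments. Unset Strict Implicit. Unset Printing Implicit Defensive.
Import Order.TTheory GRing.Theory Num.Theory.
Local Open Scope ring_scope.

Section VOADefs.
Variables (K : fieldType) (V : lmodType K).

Definition binz (a : int) (i : nat) : K :=
  (\prod_(j < i) (a - j%:Z)%:~R) / (i`!)%:R.

Definition lspan (S : V -> Prop) (x : V) : Prop :=
  exists s : seq (K * V), (forall p, p \in s -> S p.2) /\
                          x = \sum_(p <- s) p.1 *: p.2.

Variables (Y : int -> V -> V -> V)   (* Y n u v = u_n v, Y(u,z) = sum u_n z^{-n-1} *)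
          (vac omega : V) (c : K)
          (trunc : V -> V -> nat).    (* a truncation bound: u_n v = 0 for n >= trunc u v *)

Definition Lop (n : int) (v : V) : V := Y (n + 1) omega v.

Definition homog (n : int) (v : V) : Prop := Lop 0 v = n%:~R *: v.

Record is_VOA : Prop := {
  voa_char0 : forall n : nat, (n.+1)%:R != 0 :> K;
  voa_linl : forall n (a : K) u u' v, Y n (a *: u + u') v = a *: Y n u v + Y n u' v;
  voa_linr : forall n (a : K) u v v', Y n u (a *: v + v') = a *: Y n u v + Y n u v';
  voa_trunc : forall u v (n : int), (trunc u v)%:Z <= n -> Y n u v = 0;
  voa_graded : forall v, exists s : seq (int * V),
      (forall p, p \in s -> homog p.1 p.2) /\ v = \sum_(p <- s) p.2;
  voa_fin_dim : forall n : int, exists s : seq V,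
      forall v, homog n v -> lspan (fun w => w \in s) v;
  voa_bounded : exists N : int, forall n v, n < N -> homog n v -> v = 0;
  voa_vac_wt : homog 0 vac;
  voa_omega_wt : homog 2 omega;
  voa_vacuum : forall n v, Y n vac v = (if n == -1 then v else 0);
  voa_creation : forall u, Y (-1) u vac = u;
  voa_creation0 : forall u (n : nat), Y n%:Z u vac = 0;
  voa_jacobi : forall (p q r : int) u v w,
      \sum_(i < trunc u v + `|p|) binz q i *: Y (q + r - i%:Z) (Y (p + i%:Z) u v) w =
      \sum_(i < trunc v w + `|r|)
          ((-1) ^+ i * binz p i) *: Y (p + q - i%:Z) u (Y (r + i%:Z) v w)
      - \sum_(i < trunc u w + `|q|)
          ((-1) ^+ i * binz p i * (-1) ^ p) *: Y (p + r - i%:Z) v (Y (q + i%:Z) u w);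
  voa_virasoro : forall (a b : int) v,
      Lop a (Lop b v) - Lop b (Lop a v) =
      (a - b)%:~R *: Lop (a + b) v
      + (if a + b == 0 then ((a ^+ 3 - a)%:~R / 12%:R) * c else 0) *: v;
  (* L(-1)-derivative property: Y(L(-1)u, z) = d/dz Y(u, z) *)
  voa_deriv : forall (n : int) u v, Y n (Lop (-1) u) v = - (n%:~R *: Y (n - 1) u v)
}.

(* Res_z (1+z)^N z^{-e} Y(u,z) v = sum_{j >= 0} binom(N,j) u_{j-e} v  (finite sum) *)
Definition res (N : int) (e : nat) (u v : V) : V :=
  \sum_(j < trunc u v + e) binz N j *: Y (j%:Z - e%:Z) u v.

(* u *_{m,p}^n v for u homogeneous of weight wt *)
Definition star (m p n : nat) (wt : int) (u v : V) : V :=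
  \sum_(i < p.+1) ((-1) ^+ i * binz (m%:Z + n%:Z - p%:Z + i%:Z) i)
       *: res (wt + m%:Z) (m + n - p + i).+1 u v.

(* u o_m^n v for u homogeneous of weight wt *)
Definition circ (m n : nat) (wt : int) (u v : V) : V :=
  res (wt + m%:Z) (n + m).+2 u v.

Definition O_gen (n : nat) (x : V) : Prop :=
  (exists wt u v, homog wt u /\ x = circ n n wt u v)
  \/ (exists u, x = Lop (-1) u + Lop 0 u).

Definition Oset (n : nat) : V -> Prop := lspan (O_gen n).

End VOADefs.

(* Put n = m - 1 and write Res_e^N(u, v) for Res_z (1+z)^N z^-e Y(u,z)v, so that
   u *_m v = Res_(2m+1)^(wt u + m)(u, v) and u o_n v = Res_(2n+2)^(wt u + n)(u, v).
   Since L(-1)u + L(0)u lies in every O_k(V), the L(-1)-derivative property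
   Res_e^(N+1)(L(-1)u, v) = -(N+1) Res_e^N(u, v) + e Res_(e+1)^(N+1)(u, v) and Pascal's
   rule Res_(e+1)^(N+1) = Res_(e+1)^N + Res_e^N put every Res_(2n+2+k)^(wt u + n)(u, v)
   and Res_(2n+3+k)^(wt u + n + 1)(u, v) into O_n(V); u *_m v and the generators
   u o_m v of O_m(V) are of this form.
   Conversely, modulo (L(-1) + L(0))V the operator e^(zL(-1)) acts as (1+z)^-wt, so skew
   symmetry Y(v,z)u = e^(zL(-1)) Y(u,-z)v becomes
   Res_e^B(v, u) = -(-1)^e Res_e^(wt u + wt v + e - 2 - B)(u, v).  For e = 2m+1 and
   B = wt v + m this reads v *_m u = Res_(2m+1)^(wt u + n)(u, v), hence by Pascal's rule
   u o_n v = u *_m v - v *_m u modulo O_m(V). *)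

From Pilot Require Import Defs.
From mathcomp Require Import all_boot all_order all_algebra.
From mathcomp Require Import ring zify.
Set Implicit Arguments. Unset Strict Implicit. Unset Printing Implicit Defensive.
Import Order.TTheory GRing.Theory Num.Theory.
Local Open Scope ring_scope.

Section GeneralizedBinomial.
Variable K : fieldType.
Hypothesis natS_neq0 : forall n : nat, (n.+1)%:R != 0 :> K.
Local Notation binz := (binz K).

Lemma binz0 a : binz a 0 = 1.
Proof. by rewrite /binz big_ord0 fact0 divr1. Qed.

Lemma binzS a i : binz a i.+1 = a%:~R / i.+1%:R * binz (a - 1) i.
Proof.
rewrite /binz big_ord_recl subr0 factS natrM invfM.
under eq_bigr => j _ do rewrite lift0 -addn1 PoszD opprD addrA addrAC.
by ring.
Qed.

Lemma binzSr a i : binz a i.+1 = binz a i * (a - i%:Z)%:~R / i.+1%:R.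
Proof. by rewrite /binz big_ord_recr factS natrM invfM /=; ring. Qed.

Lemma binz0S i : binz 0 i.+1 = 0.
Proof. by rewrite binzS !mul0r. Qed.

Lemma binz1SS i : binz 1 i.+2 = 0.
Proof. by rewrite binzS binz0S mulr0. Qed.

Lemma binz11 : binz 1 1 = 1.
Proof. by rewrite binzS binz0 mulr1 divr1. Qed.

Lemma binzD1S a i : binz (a + 1) i.+1 = binz a i.+1 + binz a i.
Proof.
rewrite binzS binzSr addrK !intrD !intrN.
by field; rewrite addrC natr1.
Qed.

Lemma binzN1 i : binz (-1) i = (-1) ^+ i.
Proof.
elim: i => [|i IHi]; first exact: binz0.
by rewrite binzSr IHi intrD intrN exprS; field; rewrite addrC natr1.
Qed.

Lemma binz_negate a i : (-1) ^+ i * binz (- (a - i%:Z)) i = binz (a - 1) i.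
Proof.
elim: i => [|i IHi]; first by rewrite !binz0 mulr1.
rewrite binzS binzSr -IHi (_ : - (a - i.+1%:Z) - 1 = - (a - i%:Z)); last by lia.
rewrite exprS !(rmorphB, rmorphN) -addn1 !natrD !rmorphD /=.
by field; rewrite natr1.
Qed.

Lemma binz_alt_vandermonde b N s :
  \sum_(j < s.+1) (-1) ^+ j * binz b j * binz (N - j%:Z) (s - j) = binz (N - b) s.
Proof.
pose P b := forall N s,
  \sum_(j < s.+1) (-1) ^+ j * binz b j * binz (N - j%:Z) (s - j) = binz (N - b) s.
have P0 : P 0.
  move=> {}N {}s; rewrite big_ord_recl big1 ?addr0 => [|j _].
    by rewrite /= binz0 subn0 expr0 !mul1r.
  by rewrite lift0 binz0S mulr0 mul0r.
have step B M t :
    \sum_(j < t.+2) (-1) ^+ j * binz (B + 1) j * binz (M - j%:Z) (t.+1 - j) =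
    \sum_(j < t.+2) (-1) ^+ j * binz B j * binz (M - j%:Z) (t.+1 - j) -
    \sum_(j < t.+1) (-1) ^+ j * binz B j * binz (M - 1 - j%:Z) (t - j).
  rewrite big_ord_recl [in RHS]big_ord_recl !binz0 -addrA; congr (_ + _).
  rewrite -sumrB; apply: eq_bigr => j _.
  by rewrite lift0 binzD1S subSS exprS (_ : M - j.+1%:Z = M - 1 - j%:Z); [ring | lia].
have pascal B M t : binz (M - B) t.+1 = binz (M - (B + 1)) t.+1 + binz (M - 1 - B) t.
  have -> : M - 1 - B = M - (B + 1) by ring.
  by rewrite -binzD1S; congr binz; ring.
have up B : P B -> P (B + 1).
  move=> PB {}N [|{}s]; first by rewrite !big_ord1 !binz0 !mulr1.
  by rewrite step !PB pascal addrK.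
have down B : P (B + 1) -> P B.
  move=> PB1 {}N {}s; elim: s N => [|{}s IHs] {}N; first by rewrite !big_ord1 !binz0 !mulr1.
  by apply/eqP; rewrite pascal -subr_eq -IHs -PB1 step.
elim/int_ind: b N s => [|n IHn|n IHn]; first exact: P0.
  by rewrite -addn1 PoszD; apply: up.
by apply: down; rewrite -addn1 PoszD opprD addrNK.
Qed.

End GeneralizedBinomial.

Section LinearSpan.
Variables (K : fieldType) (V : lmodType K).
Implicit Types (S T : V -> Prop) (x y : V).

Lemma lspan0 S : lspan S 0.
Proof. by exists [::]; rewrite big_nil. Qed.

Lemma lspan_gen S x : S x -> lspan S x.
Proof.
move=> Sx; exists [:: (1, x)]; split; last by rewrite big_seq1 scale1r.
by move=> p; rewrite inE => /eqP ->.
Qed.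

Lemma lspanD S x y : lspan S x -> lspan S y -> lspan S (x + y).
Proof.
move=> [s1 [S1 ->]] [s2 [S2 ->]]; exists (s1 ++ s2); split; last by rewrite big_cat.
by move=> p; rewrite mem_cat => /orP[]; [apply: S1 | apply: S2].
Qed.

Lemma lspanZ S a x : lspan S x -> lspan S (a *: x).
Proof.
move=> [s [Ss ->]]; exists [seq (a * p.1, p.2) | p <- s]; split.
  by move=> q /mapP[p ps ->]; exact: (Ss _ ps).
by rewrite big_map scaler_sumr; apply: eq_bigr => p _; rewrite scalerA.
Qed.

Lemma lspanB S x y : lspan S x -> lspan S y -> lspan S (x - y).
Proof. by move=> Sx Sy; rewrite -scaleN1r; apply/lspanD/lspanZ. Qed.

Lemma lspan_sum S (I : eqType) (r : seq I) (F : I -> V) :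
  (forall i, i \in r -> lspan S (F i)) -> lspan S (\sum_(i <- r) F i).
Proof.
elim: r => [|i r IHr] SF; first by rewrite big_nil; apply: lspan0.
rewrite big_cons; apply: lspanD; first by apply: SF; rewrite mem_head.
by apply: IHr => j jr; apply: SF; rewrite in_cons jr orbT.
Qed.

Lemma sub_lspan S T x : (forall y, S y -> lspan T y) -> lspan S x -> lspan T x.
Proof.
move=> ST [s [Ss ->]]; apply: lspan_sum => p ps.
by apply/lspanZ/ST/Ss.
Qed.

Lemma lspanS S T x : (forall y, S y -> T y) -> lspan S x -> lspan T x.
Proof. by move=> ST; apply: sub_lspan => y /ST; apply: lspan_gen. Qed.

Lemma sum_ord_widen (F : nat -> V) n M : (n <= M)%N ->
  (forall j, (n <= j)%N -> F j = 0) -> \sum_(j < n) F j = \sum_(j < M) F j.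
Proof.
move=> nM F0; rewrite (big_ord_widen _ _ nM) big_mkcond /=.
by apply: eq_bigr => j _; case: ltnP => // /F0 ->.
Qed.

Lemma sum_ord_widen_eq (F : nat -> V) n1 n2 :
    (forall j, (n1 <= j)%N -> F j = 0) -> (forall j, (n2 <= j)%N -> F j = 0) ->
  \sum_(j < n1) F j = \sum_(j < n2) F j.
Proof.
move=> F1 F2; rewrite (@sum_ord_widen F n1 (n1 + n2)) ?leq_addr //.
by rewrite (@sum_ord_widen F n2 (n1 + n2)) ?leq_addl.
Qed.

Lemma sum_ord_triangle (F : nat -> nat -> V) M :
  \sum_(s < M) \sum_(j < s.+1) F j (s - j)%N = \sum_(j < M) \sum_(i < M - j) F j i.
Proof.
elim: M => [|M IHM]; first by rewrite !big_ord0.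
rewrite big_ord_recr /= IHM [RHS]big_ord_recr /= subSnn big_ord1.
rewrite [in RHS](eq_bigr (fun j : 'I_M => \sum_(i < M - j) F j i + F j (M - j)%N)).
  by rewrite big_split /= -!addrA [in LHS]big_ord_recr /= subnn.
by move=> j _; rewrite subSn ?big_ord_recr // ltnW.
Qed.

End LinearSpan.

Lemma signzK (K : fieldType) (p : int) : (-1) ^ p * (-1) ^ p = 1 :> K.
Proof. by rewrite -expfzMl mulrNN mulr1 exp1rz. Qed.

Lemma signz_subn (K : fieldType) (j e : nat) : (-1) ^ (j%:Z - e%:Z) = (-1) ^+ (j + e) :> K.
Proof.
by rewrite expfzDr ?oppr_eq0 ?oner_eq0 // -exprnP -exprnN invr_sign -exprD.
Qed.

Section VertexOperatorAlgebra.
Variables (K : fieldType) (V : lmodType K) (Y : int -> V -> V -> V)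
          (vac omega : V) (c : K) (trunc : V -> V -> nat).
Hypothesis HV : is_VOA Y vac omega c trunc.
Let natS_neq0 : forall n : nat, (n.+1)%:R != 0 :> K := voa_char0 HV.

Local Notation hom := (homog Y omega).
Local Notation L := (Lop Y omega).
Local Notation binz := (binz K).
Local Notation res := (res Y trunc).
Local Notation star := (star Y trunc).
Local Notation circ := (circ Y trunc).
Local Notation Os := (Oset Y omega trunc).

Lemma Yl0 n w : Y n 0 w = 0.
Proof. by have := voa_linl HV n (-1) 0 0 w; rewrite scaler0 addr0 scaleN1r addNr. Qed.

Lemma Yr0 n u : Y n u 0 = 0.
Proof. by have := voa_linr HV n (-1) u 0 0; rewrite scaler0 addr0 scaleN1r addNr. Qed.

Lemma YrD n u w w' : Y n u (w + w') = Y n u w + Y n u w'.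
Proof. by have := voa_linr HV n 1 u w w'; rewrite !scale1r. Qed.

Lemma YlZ n a u w : Y n (a *: u) w = a *: Y n u w.
Proof. by have := voa_linl HV n a u 0 w; rewrite !addr0 Yl0 addr0. Qed.

Lemma YrZ n a u w : Y n u (a *: w) = a *: Y n u w.
Proof. by have := voa_linr HV n a u w 0; rewrite !addr0 Yr0 addr0. Qed.

Lemma Y_trunc_abs u v (p : int) (i : nat) : (trunc u v + `|p| <= i)%N -> Y (p + i%:Z) u v = 0.
Proof. by move=> le_i; apply: (voa_trunc HV); case: p le_i => p /=; rewrite ?NegzE; lia. Qed.

Lemma jacobi_widen p q r u v w M1 M2 M3 :
    (trunc u v + `|p| <= M1)%N -> (trunc v w + `|r| <= M2)%N ->
    (trunc u w + `|q| <= M3)%N ->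
  \sum_(i < M1) binz q i *: Y (q + r - i%:Z) (Y (p + i%:Z) u v) w =
  \sum_(i < M2) ((-1) ^+ i * binz p i) *: Y (p + q - i%:Z) u (Y (r + i%:Z) v w)
  - \sum_(i < M3) ((-1) ^+ i * binz p i * (-1) ^ p) *: Y (p + r - i%:Z) v (Y (q + i%:Z) u w).
Proof.
move=> le1 le2 le3; have := voa_jacobi HV p q r u v w.
rewrite (@sum_ord_widen _ _ (fun i : nat => binz q i *: Y (q + r - i%:Z) (Y (p + i%:Z) u v) w)
  _ M1 le1) => [|i le_i]; last by rewrite Y_trunc_abs // Yl0 scaler0.
rewrite (@sum_ord_widen _ _ (fun i : nat =>
  ((-1) ^+ i * binz p i) *: Y (p + q - i%:Z) u (Y (r + i%:Z) v w)) _ M2 le2) => [|i le_i];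
  last by rewrite Y_trunc_abs // Yr0 scaler0.
rewrite (@sum_ord_widen _ _ (fun i : nat =>
  ((-1) ^+ i * binz p i * (-1) ^ p) *: Y (p + r - i%:Z) v (Y (q + i%:Z) u w)) _ M3 le3) //.
by move=> i le_i; rewrite Y_trunc_abs // Yr0 scaler0.
Qed.

Lemma L0E x : L 0 x = Y 1 omega x.
Proof. by rewrite /Lop add0r. Qed.

Lemma LN1E x : L (-1) x = Y 0 omega x.
Proof. by rewrite /Lop addNr. Qed.

Lemma homog_Y a b j u v : hom a u -> hom b v -> hom (a + b - j - 1) (Y j u v).
Proof.
move=> hu hv.
(* L(0)(u_j v) = (L(-1)u)_(j+1) v + (L(0)u)_j v + u_j L(0)v *)
have := @jacobi_widen 0 1 j omega u v (trunc omega u).+2 (trunc u v + `|j|).+1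
  (trunc omega v).+1; rewrite !addn0 addn1 => /(_ (leqW (leqnSn _)) (leqnSn _) (ltnSn _)).
rewrite !big_ord_recl !big1 => [|i _|i _|i _];
  rewrite ?lift0 ?binz0S ?binz1SS ?(mulr0, mul0r, scale0r) //=.
rewrite -[Posz 0]/(0 : int) -[Posz 1]/(1 : int) !binz0 binz11 expr0z !mul1r !scale1r.
rewrite !(addr0, add0r, subr0) [1 + j]addrC addrK -!L0E -LN1E.
rewrite hu hv YlZ YrZ (voa_deriv HV) addrK.
move=> /eqP; rewrite eq_sym subr_eq /homog => /eqP ->.
by rewrite -scaleNr -!scalerDl !intrD !intrN; congr (_ *: _); ring.
Qed.

Lemma homog_LN1 k x : hom k x -> hom (k + 1) (L (-1) x).
Proof.
move=> hx; rewrite LN1E.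
by have := homog_Y 0 (voa_omega_wt HV) hx; rewrite (_ : 2 + k - 0 - 1 = k + 1) //; ring.
Qed.

Lemma res_widen N e u v M : (trunc u v + e <= M)%N ->
  res N e u v = \sum_(j < M) binz N j *: Y (j%:Z - e%:Z) u v.
Proof.
move=> le_M; apply: (@sum_ord_widen _ _ (fun j => binz N j *: Y (j%:Z - e%:Z) u v)) => // j le_j.
by rewrite (voa_trunc HV) ?scaler0 //; lia.
Qed.

Lemma res_addr N e u v v' : res N e u (v + v') = res N e u v + res N e u v'.
Proof.
pose M := (trunc u v + trunc u v' + trunc u (v + v') + e)%N.
rewrite !(@res_widen _ _ _ _ M) ?/M; try lia.
by rewrite -big_split; apply: eq_bigr => j _; rewrite YrD scalerDr.
Qed.

Lemma res_sumr N e u (s : seq (int * V)) :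
  res N e u (\sum_(p <- s) p.2) = \sum_(p <- s) res N e u p.2.
Proof.
elim: s => [|p s IHs]; last by rewrite !big_cons res_addr IHs.
by rewrite !big_nil /Defs.res big1 // => j _; rewrite Yr0 scaler0.
Qed.

Lemma resD1 N e u v : res (N + 1) e.+1 u v = res N e.+1 u v + res N e u v.
Proof.
pose M := (trunc u v + e)%N.
rewrite (@res_widen N e u v M) // !(@res_widen _ e.+1 u v M.+1) ?addnS //.
rewrite big_ord_recl [X in _ = X + _]big_ord_recl !binz0 -addrA -big_split.
congr (_ + _); apply: eq_bigr => i _; rewrite lift0 (binzD1S natS_neq0) scalerDl.
by rewrite (_ : i.+1%:Z - e.+1%:Z = i%:Z - e%:Z) //; lia.
Qed.

Lemma res_LN1 N e u v : res (N + 1) e (L (-1) u) v =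
  - (N + 1)%:~R *: res N e u v + e%:R *: res (N + 1) e.+1 u v.
Proof.
pose M := (trunc u v + trunc (L (-1) u) v + e)%N.
rewrite (@res_widen _ _ _ _ M.+1) ?(@res_widen N e _ _ M) ?(@res_widen _ e.+1 _ _ M.+1); try lia.
rewrite (eq_bigr (fun j : 'I_M.+1 =>
  (binz (N + 1) j * (e%:R - j%:R)) *: Y (j%:Z - e%:Z - 1) u v)); last first.
  move=> j _; rewrite (voa_deriv HV) scalerN -scaleNr scalerA.
  by congr (_ *: _); rewrite intrB; ring.
rewrite big_ord_recl [in RHS]big_ord_recl !binz0 scalerDr !scaler_sumr addrCA -big_split.
rewrite subr0 mul1r scale1r; congr (_ + _); first by congr (_ *: Y _ u v); lia.
apply: eq_bigr => i _; rewrite lift0 /= !scalerA.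
rewrite (_ : i.+1%:Z - e%:Z - 1 = i%:Z - e%:Z); last by lia.
rewrite (_ : i.+1%:Z - e.+1%:Z = i%:Z - e%:Z); last by lia.
rewrite -scalerDl; congr (_ *: _); rewrite binzS addrK !intrD.
by field; rewrite addrC natr1 natS_neq0.
Qed.

Lemma Oset_res_raise n e :
    (forall w u v, hom w u -> Os n (res (w + n%:Z) e.+1 u v)) ->
  forall w u v, hom w u -> Os n (res (w + n%:Z + 1) e.+2 u v).
Proof.
move=> Os_res w u v hu; have := Os_res _ _ v (homog_LN1 hu).
rewrite (_ : w + 1 + n%:Z = w + n%:Z + 1) ?res_LN1 //; last by ring.
move=> /(lspanD (lspanZ ((w + n%:Z + 1)%:~R) (Os_res _ _ v hu))).
rewrite scaleNr addrA addrN add0r => /(lspanZ (e.+1%:R)^-1).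
by rewrite scalerA mulVf ?scale1r // natS_neq0.
Qed.

Lemma Oset_res n k w u v : hom w u -> Os n (res (w + n%:Z) (k + (n + n)).+2 u v).
Proof.
elim: k w u v => [|k IHk] w u v hu; first by apply: lspan_gen; left; exists w, u, v.
have := Oset_res_raise IHk v hu; rewrite resD1.
by move=> /lspanB /(_ (IHk _ _ v hu)); rewrite addrK.
Qed.

Lemma Oset_resS n k w u v : hom w u -> Os n (res (w + n%:Z + 1) (k + (n + n)).+3 u v).
Proof. exact/Oset_res_raise/Oset_res. Qed.

Lemma starE m wt u v : star m 0 m wt u v = res (wt + m%:Z) (m + m).+1 u v.
Proof. by rewrite /Defs.star big_ord1 binz0 expr0 mul1r scale1r subn0 addn0. Qed.

Lemma Oset_star n wt u v : hom wt u -> Os n (star n.+1 0 n.+1 wt u v).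
Proof.
rewrite starE (_ : (n.+1 + n.+1).+1 = (0 + (n + n)).+3); last by lia.
by rewrite -addn1 PoszD addrA; apply: Oset_resS.
Qed.

Lemma Oset_circS n wt u v : hom wt u -> Os n (circ n.+1 n.+1 wt u v).
Proof.
rewrite /Defs.circ (_ : (n.+1 + n.+1).+2 = (1 + (n + n)).+3); last by lia.
by rewrite -addn1 PoszD addrA; apply: Oset_resS.
Qed.

Lemma OsetS_sub n x : Os n.+1 x -> Os n x.
Proof.
apply: sub_lspan => y [[wt [u [v [hu ->]]]] | [z ->]]; first exact: Oset_circS.
by apply: lspan_gen; right; exists z.
Qed.

Definition OL := lspan (fun y : V => exists x, y = L (-1) x + L 0 x).

Lemma OL_Oset n x : OL x -> Os n x.
Proof. by apply: lspanS => _ [y ->]; right; exists y. Qed.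

Lemma skew_Y p u v : (-1) ^ p *: Y p v u =
  - \sum_(i < trunc u v + `|p|) (-1) ^+ i *: Y (-1 - i%:Z) (Y (p + i%:Z) u v) vac.
Proof.
have := voa_jacobi HV p (-1) 0 u v vac; rewrite [X in _ = X - _]big1 => [|i _]; last first.
  by rewrite add0r (voa_creation0 HV) Yr0 scaler0.
rewrite addn1 big_ord_recl [X in _ - (_ + X)]big1 => [|i _]; last first.
  by rewrite lift0 (_ : -1 + i.+1%:Z = i%:Z) ?(voa_creation0 HV) ?Yr0 ?scaler0 //; lia.
rewrite binz0 expr0 !mul1r addr0 sub0r (voa_creation HV) /= -[Posz 0]/(0 : int) !addr0.
move=> J; rewrite -[LHS]opprK -J; congr (- _); apply: eq_bigr => i _.
by rewrite (binzN1 natS_neq0).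
Qed.

(* x_(-1-i) vac = L(-1)^i x / i!, and L(-1) acts as -L(0) modulo OL. *)
Lemma OL_Yvac i x k : hom k x -> OL (Y (-1 - i%:Z) x vac - binz (- k) i *: x).
Proof.
elim: i x k => [|i IHi] x k hx.
  by rewrite subr0 (voa_creation HV) binz0 scale1r subrr; apply: lspan0.
have := IHi _ _ (homog_LN1 hx); rewrite (voa_deriv HV) -scaleNr.
rewrite (_ : -1 - i%:Z - 1 = -1 - i.+1%:Z); last by lia.
have hL : OL (L (-1) x + L 0 x) by apply: lspan_gen; exists x.
move=> /lspanD /(_ (lspanZ (binz (- (k + 1)) i) hL)) /(lspanZ (i.+1%:R)^-1).
rewrite [X in _ + X]scalerDr addrA subrK hx scalerDr !scalerA.
have -> : (i.+1%:R)^-1 * - (-1 - i%:Z)%:~R = 1 :> K.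
  by rewrite -intrN opprB opprK intrD; field; rewrite addrC natr1 natS_neq0.
rewrite scale1r (_ : _ * _ * _ = - binz (- k) i.+1) ?scaleNr //.
by rewrite binzS opprD intrN; ring.
Qed.

Lemma skew_Y_OL a b p u v M : hom a u -> hom b v -> (trunc u v)%:Z <= p + M%:Z ->
  OL (Y p v u + (-1) ^ p *: \sum_(i < M) binz (a + b - 2 - p) i *: Y (p + i%:Z) u v).
Proof.
move=> hu hv le_M.
rewrite (@sum_ord_widen_eq _ _ (fun i => binz (a + b - 2 - p) i *: Y (p + i%:Z) u v) _
  (trunc u v + `|p|)) => [|i le_i|i le_i]; last 2 first.
- by rewrite (voa_trunc HV) ?scaler0 //; lia.
- by rewrite Y_trunc_abs ?scaler0.
rewrite -[Y p v u]scale1r -{1}(signzK K p) -scalerA skew_Y scalerN addrC -scalerBr -sumrB.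
apply: lspanZ; apply: lspan_sum => i _.
have wt_i := homog_Y (p + i%:Z) hu hv.
rewrite (_ : a + b - 2 - p = a + b - 1 - p - 1); last by ring.
rewrite -(binz_negate natS_neq0).
rewrite (_ : - (a + b - 1 - p - i%:Z) = - (a + b - (p + i%:Z) - 1)); last by ring.
rewrite -scalerA -scalerBr -opprB -scaleN1r scalerA; apply: lspanZ; exact: OL_Yvac.
Qed.

(* Coefficientwise sum_j (-z)^j binom(B, j) (1+z)^(N-j) = (1+z)^(N-B). *)
Lemma res_binz_convolution B N e u v T : (trunc u v + e <= T)%N ->
  \sum_(j < T) ((-1) ^+ j * binz B j) *:
     \sum_(i < T - j) binz (N - j%:Z) i *: Y ((j + i)%N%:Z - e%:Z) u v =
  res (N - B) e u v.
Proof.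
move=> le_T; rewrite (res_widen (N - B) le_T).
pose F j i := ((-1) ^+ j * binz B j * binz (N - j%:Z) i) *: Y ((j + i)%N%:Z - e%:Z) u v.
transitivity (\sum_(j < T) \sum_(i < T - j) F j i).
  by apply: eq_bigr => j _; rewrite scaler_sumr; apply: eq_bigr => i _; rewrite scalerA.
rewrite -sum_ord_triangle; apply: eq_bigr => s _.
rewrite -(binz_alt_vandermonde natS_neq0 B N s) scaler_suml; apply: eq_bigr => j _.
by rewrite /F subnKC // -ltnS.
Qed.

Lemma skew_res a b u v B e : hom a u -> hom b v ->
  OL (res B e v u + (-1) ^+ e *: res (a + b + e%:Z - 2 - B) e u v).
Proof.
move=> hu hv; pose T := (trunc u v + trunc v u + e)%N.
rewrite (@res_widen B e v u T) -?(@res_binz_convolution B _ e u v T); try lia.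
rewrite scaler_sumr -big_split; apply: lspan_sum => j _ /=.
rewrite scalerA (_ : (-1) ^+ e * ((-1) ^+ j * binz B j) = binz B j * (-1) ^ (j%:Z - e%:Z)).
  rewrite -[(binz B j * _) *: _]scalerA -scalerDr; apply: lspanZ.
  rewrite (_ : a + b + e%:Z - 2 - j%:Z = a + b - 2 - (j%:Z - e%:Z)); last by ring.
  rewrite (eq_bigr (fun i : 'I_(T - j) =>
    binz (a + b - 2 - (j%:Z - e%:Z)) i *: Y (j%:Z - e%:Z + i%:Z) u v)) => [|i _].
    by apply: skew_Y_OL => //; have := ltn_ord j; lia.
  by congr (_ *: Y _ u v); rewrite PoszD addrAC.
by rewrite (signz_subn K) exprD; ring.
Qed.

Lemma circ_star_OL n a b u w : hom a u -> hom b w ->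
  OL (circ n n a u w - (star n.+1 0 n.+1 a u w - star n.+1 0 n.+1 b w u)).
Proof.
move=> hu hw; have := skew_res (b + n.+1%:Z) (n + n).+3 hu hw.
rewrite (_ : a + b + (n + n).+3%:Z - 2 - (b + n.+1%:Z) = a + n%:Z); last by lia.
rewrite -signr_odd /= oddD addbb scaleN1r /Defs.circ !starE.
rewrite (_ : (n.+1 + n.+1).+1 = (n + n).+3); last by lia.
rewrite (_ : a + n.+1%:Z = a + n%:Z + 1); last by lia.
by rewrite resD1 [res _ (n + n).+3 u w + _]addrC -addrA opprD addNKr opprB.
Qed.

Definition star_gen m y := exists wt u v, hom wt u /\ y = star m 0 m wt u v.

Lemma circ_lspan_star n a b u w : hom a u -> hom b w ->
  lspan (fun y => star_gen n.+1 y \/ Os n.+1 y) (circ n n a u w).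
Proof.
move=> hu hw.
rewrite -(subrK (star n.+1 0 n.+1 a u w - star n.+1 0 n.+1 b w u) (circ n n a u w)).
apply: lspanD; first by apply/lspan_gen; right; apply/OL_Oset/circ_star_OL.
by apply: lspanB; apply: lspan_gen; left; [exists a, u, w | exists b, w, u].
Qed.

End VertexOperatorAlgebra.

Unset Implicit Arguments.

Theorem lemma5p1 (K : fieldType) (V : lmodType K) (Y : int -> V -> V -> V)
    (vac omega : V) (c : K) (trunc : V -> V -> nat)
    (HV : is_VOA Y vac omega c trunc) (m : nat) (Hm : (0 < m)%N) :
  forall x : V,
    lspan (fun y => (exists (wt : int) (u v : V),
                      homog Y omega wt u /\ y = star Y trunc m 0 m wt u v)
                   \/ Oset Y omega trunc m y) x
    <-> Oset Y omega trunc m.-1 x.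
Proof.
case: m Hm => // n _ x /=; split.
  apply: sub_lspan => y [[wt [u [v [hu ->]]]] | ]; first exact: (Oset_star HV).
  exact: (OsetS_sub HV).
apply: sub_lspan => _ [[a [u [v [hu ->]]]] | [z ->]].
  have [s [hs ->]] := voa_graded HV v; rewrite /circ (res_sumr HV).
  by apply: lspan_sum => -[b w] /hs /= hw; exact: (circ_lspan_star HV n hu hw).
by apply/lspan_gen; right; apply/lspan_gen; right; exists z.
Qed.
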